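(* Let $\Theta$ be a causal theory over $\mathfrak L$ and $M\in\mathfrak M$. Then $M$ is causally explained by $\Theta$ if and only if, as a world of the Kripke model $K_\Theta$, $M\Vdash(\Box p\to p)\wedge(p\to\Box p)$ for every $p\in\mathcal L_\Box$.
   Context: $\mathfrak L$ is a classical propositional language with classical consequence $\vdash$; $\mathrm{Cn}(X)$ is the $\vdash$-closure of $X$; $\mathfrak M$ is the set of models (valuations) of $\mathfrak L$. A causal rule is $\phi\triangleright\psi$ with $\phi,\psi\in\mathfrak L$; a causal theory $\Theta$ is a set of causal rules. For $M\in\mathfrak M$, $M^{\Theta}=\mathrm{Cn}(\{\psi : \phi\triangleright\psi\in\Theta,\ M\Vdash\phi\})$, and $M$ is causally explained by $\Theta$ iff $M$ is the only model of $M^\Theta$. $R_\Theta$ on $\mathfrak M$: $M\,R_\Theta\,M'$ iff for every $\phi\triangleright\psi\in\Theta$, $M\Vdash\phi$ implies $M'\Vdash\psi$. $\mathcal L_\Box$ is generated by $\mathfrak L$ and a unary operator $\Box$. The Kripke model $K_\Theta$ has worlds $\mathfrak M$, accessibility $R_\Theta$, atoms forced as in the valuation, Boolean connectives classical, and $M\Vdash\Box p$ iff $M'\Vdash p$ for all $M'$ with $M\,R_\Theta\,M'$. *)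

From Stdlib Require Import Classical.

Set Implicit Arguments.

Section Defs.
Variable Atom : Type.

Inductive form : Type :=
| FVar : Atom -> form
| FBot : form
| FTop : form
| FNeg : form -> form
| FAnd : form -> form -> form
| FOr  : form -> form -> form
| FImp : form -> form -> form.

Definition model := Atom -> bool.

Fixpoint sat (M : model) (f : form) : Prop :=
  match f with
  | FVar a => M a = true
  | FBot => False
  | FTop => True
  | FNeg p => ~ sat M p
  | FAnd p q => sat M p /\ sat M q
  | FOr p q => sat M p \/ sat M q
  | FImp p q => sat M p -> sat M q
  end.

(* Classical consequence X ⊢ φ (semantic, by completeness of classical
   propositional logic) and its closure Cn(X). *)
Definition entails (X : form -> Prop) (phi : form) : Prop :=
  forall M : model, (forall psi, X psi -> sat M psi) -> sat M phi.

Definition Cn (X : form -> Prop) : form -> Prop := fun phi => entails X phi.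

Record crule : Type := CRule { cr_body : form; cr_head : form }.
Definition ctheory := crule -> Prop.

Definition heads (Th : ctheory) (M : model) : form -> Prop :=
  fun psi => exists phi, Th (CRule phi psi) /\ sat M phi.

Definition MTheta (Th : ctheory) (M : model) : form -> Prop := Cn (heads Th M).

Definition is_model_of (M : model) (X : form -> Prop) : Prop :=
  forall phi, X phi -> sat M phi.

Definition causally_explained (Th : ctheory) (M : model) : Prop :=
  is_model_of M (MTheta Th M) /\
  forall M' : model, is_model_of M' (MTheta Th M) -> M' = M.

Definition RTheta (Th : ctheory) (M M' : model) : Prop :=
  forall phi psi, Th (CRule phi psi) -> sat M phi -> sat M' psi.

Inductive mform : Type :=
| MVar : Atom -> mform
| MBot : mform
| MTop : mform
| MNeg : mform -> mform
| MAnd : mform -> mform -> mform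
| MOr  : mform -> mform -> mform
| MImp : mform -> mform -> mform
| MBox : mform -> mform.

(* Forcing in the Kripke model K_Θ (worlds 𝔐, accessibility R_Θ) *)
Fixpoint forces (Th : ctheory) (M : model) (p : mform) : Prop :=
  match p with
  | MVar a => M a = true
  | MBot => False
  | MTop => True
  | MNeg q => ~ forces Th M q
  | MAnd q r => forces Th M q /\ forces Th M r
  | MOr q r => forces Th M q \/ forces Th M r
  | MImp q r => forces Th M q -> forces Th M r
  | MBox q => forall M', RTheta Th M M' -> forces Th M' q
  end.

End Defs.

(* A valuation M' is a model of M^Θ exactly when M R_Θ M', since M^Θ
   is the closure of the heads of the rules whose bodies M satisfies.  Hence
   "M is causally explained by Θ" says precisely that the R_Θ-successors of M
   are M alone.  At a world whose only successor is itself, □p and p are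
   forced alike, for every modal p.  Conversely, the schema p → □p applied
   to the literals a and ¬a forces every successor of M to agree with M on
   every atom, so M has no successor but itself; and the instance □⊥ → ⊥
   says that M has some successor at all. *)

From Stdlib Require Import Classical FunctionalExtensionality.

Set Implicit Arguments.

Section CausalKripke.

Variable Atom : Type.
Variable Th : ctheory Atom.

Lemma model_of_MTheta_iff_RTheta (M M' : model Atom) :
  is_model_of M' (MTheta Th M) <-> RTheta Th M M'.
Proof.
  split.
  - intros Hmod phi psi Hrule Hbody.
    apply Hmod. intros N HN. apply HN. exists phi; auto.
  - intros HR phi Hphi. apply Hphi.
    intros psi [phi' [Hrule Hbody]]. eapply HR; eauto.
Qed.

Definition self_only_successor (M : model Atom) : Prop :=
  forall M', RTheta Th M M' <-> M' = M.

Lemma causally_explained_iff_self_only (M : model Atom) :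
  causally_explained Th M <-> self_only_successor M.
Proof.
  unfold causally_explained, self_only_successor. split.
  - intros [Hself Huniq] M'. split.
    + intros HR. apply Huniq, model_of_MTheta_iff_RTheta, HR.
    + intros ->. apply model_of_MTheta_iff_RTheta, Hself.
  - intros Honly. split.
    + apply model_of_MTheta_iff_RTheta, Honly. reflexivity.
    + intros M' Hmod. apply Honly, model_of_MTheta_iff_RTheta, Hmod.
Qed.

Lemma box_iff_at_self_only (M : model Atom) (p : mform Atom) :
  self_only_successor M -> (forces Th M (MBox p) <-> forces Th M p).
Proof.
  intros Honly. simpl. split.
  - intros Hbox. apply Hbox, Honly. reflexivity.
  - intros Hp M' HR. apply Honly in HR. subst M'. exact Hp.
Qed.

(* If p → □p holds at M for every p, then every successor of M is M:
   the literals a and ¬a propagate the value of each atom. *)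
Lemma successor_is_self (M M' : model Atom) :
  (forall p, forces Th M (MImp p (MBox p))) -> RTheta Th M M' -> M' = M.
Proof.
  intros H4 HR. apply functional_extensionality. intros a.
  destruct (M a) eqn:Ea.
  - exact (H4 (MVar a) Ea M' HR).
  - assert (Hneg : forces Th M (MNeg (MVar a))) by (simpl; congruence).
    specialize (H4 (MNeg (MVar a)) Hneg M' HR). simpl in H4.
    destruct (M' a); congruence.
Qed.

Lemma successor_exists (M : model Atom) :
  forces Th M (MImp (MBox (MBot Atom)) (MBot Atom)) ->
  exists M', RTheta Th M M'.
Proof.
  simpl. intros HT. apply NNPP. intros Hnone.
  apply HT. intros M' HR. apply Hnone. exists M'. exact HR.
Qed.

End CausalKripke.

Theorem mainTheorem4 (Atom : Type) (Th : ctheory Atom) (M : model Atom) :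
  causally_explained Th M <->
  (forall p : mform Atom,
      forces Th M (MAnd (MImp (MBox p) p) (MImp p (MBox p)))).
Proof.
  rewrite causally_explained_iff_self_only. split.
  - intros Honly p.
    destruct (box_iff_at_self_only p Honly) as [Hbox_to_p Hp_to_box].
    split; [exact Hbox_to_p | exact Hp_to_box].
  - intros Hschemas.
    assert (Hsucc : forall M', RTheta Th M M' -> M' = M).
    { intros M'. apply successor_is_self. intros p. apply Hschemas. }
    destruct (successor_exists (proj1 (Hschemas (MBot Atom)))) as [M' HR].
    assert (HRself : RTheta Th M M) by (rewrite (Hsucc M' HR) in HR; exact HR).
    intros M''. split.
    + apply Hsucc.
    + intros ->. exact HRself.
Qed.
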